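(* Under the setting and with the quantities $\boldsymbol{\Psi}_{i,j}$, $\mathbf{D}_i$ defined in the context, run the following procedure on block arrays $\mathbf{N}_{j,k}$, $\mathbf{P}_{j,k}$ indexed by related pairs $(j,k)$ (i.e. $j=k$, $j\in P_k$, or $k\in P_j$): (1) Initialize $\mathbf{N}_{j,k}=\boldsymbol{\Sigma}^<_{j,j}\big((\mathbf{A}^{-1})_{k,j}\big)^\dagger$ for every related pair $(j,k)$. (2) For $l=1,\dots,\lambda-1$ in increasing order, for every cluster $i$ with $\ell(i)=l$, and for all $j,k\in P_i$: replace $\mathbf{N}_{j,k}$ by $\mathbf{N}_{j,k}+\boldsymbol{\Psi}_{i,j}^T\mathbf{N}_{i,k}$. (3) Set $\mathbf{P}_{j,k}=\mathbf{D}_j^{-1}\mathbf{N}_{j,k}$ for every related pair $(j,k)$. (4) For $l=\lambda-1,\dots,1$ in decreasing order, for every cluster $i$ with $\ell(i)=l$: first, for every $j\in P_i$ replace $\mathbf{P}_{i,j}$ by $\mathbf{P}_{i,j}+\sum_{k\in P_i}\boldsymbol{\Psi}_{i,k}\mathbf{P}_{k,j}$; then set $\mathbf{P}_{j,i}=-(\mathbf{P}_{i,j})^\dagger$ for every $j\in P_i$; then replace $\mathbf{P}_{i,i}$ by $\mathbf{P}_{i,i}+\sum_{j\in P_i}\boldsymbol{\Psi}_{i,j}\mathbf{P}_{j,i}$. Then at termination, for every cluster $i$ and every $j\in P_i\cup\{i\}$, $\mathbf{P}_{i,j}=\mathbf{G}^<_{i,j}$ and $\mathbf{P}_{j,i}=\mathbf{G}^<_{j,i}$,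 where $\mathbf{G}^<=\mathbf{A}^{-1}\boldsymbol{\Sigma}^<(\mathbf{A}^{-1})^\dagger$. In particular all diagonal blocks $\mathbf{G}^<_{i,i}$ are obtained.
   Context: Let $\mathbf{A}\in\mathbb{C}^{n\times n}$ be invertible and complex symmetric ($\mathbf{A}^T=\mathbf{A}$; ${}^T$ is the non-conjugated transpose, $\dagger$ the conjugate transpose). The index set is partitioned into clusters $1,\dots,M$ organized as a rooted tree (as produced by nested dissection: each separator is the parent of the clusters it separates). For a cluster $i$, $P_i$ denotes the set of its ancestors in the tree. Blocks are written $\mathbf{A}_{i,j}$. Assume $\mathbf{A}_{i,j}=\mathbf{0}$ unless $i=j$, $i\in P_j$ or $j\in P_i$. Each cluster $i$ has a level $\ell(i)\in\{1,\dots,\lambda\}$ with $\ell(j)>\ell(i)$ whenever $j\in P_i$; the root is the only cluster of level $\lambda$. Folding: set $\mathbf{A}^{(0)}=\mathbf{A}$. For $l=1,\dots,\lambda-1$: set $\mathbf{A}^{(l)}=\mathbf{A}^{(l-1)}$, and for each cluster $i$ with $\ell(i)=l$: define $\boldsymbol{\Psi}_{i,j}=-(\mathbf{A}^{(l)}_{i,i})^{-1}\mathbf{A}^{(l)}_{i,j}$ for $j\in P_i$; replace $\mathbf{A}^{(l)}_{j,k}$ by $\mathbf{A}^{(l)}_{j,k}+\boldsymbol{\Psi}_{i,j}^T\mathbf{A}^{(l)}_{i,k}$ for all $j,k\in P_i$; and set $\mathbf{A}^{(l)}_{i,j}=\mathbf{A}^{(l)}_{j,i}=\mathbf{0}$ for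 $j\in P_i$. It is assumed that every block $\mathbf{A}^{(l)}_{i,i}$ inverted here is invertible and that the final diagonal blocks are invertible. Let $\mathbf{D}_i$ denote the $(i,i)$ diagonal block of $\mathbf{A}^{(\lambda-1)}$ (which is block diagonal). $\boldsymbol{\Sigma}^<$ is block diagonal with respect to the clusters (diagonal blocks $\boldsymbol{\Sigma}^<_{i,i}$) and skew-Hermitian: $(\boldsymbol{\Sigma}^<)^\dagger=-\boldsymbol{\Sigma}^<$. $(\mathbf{A}^{-1})_{k,j}$ and $\mathbf{G}^<_{i,j}$ denote cluster blocks of the respective matrices. *)

From HB Require Import structures.
From mathcomp Require Import all_boot all_order all_algebra.
Set Implicit Arguments. Unset Strict Implicit. Unset Printing Implicit Defensive.
Import Order.TTheory GRing.Theory Num.Theory.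
Local Open Scope ring_scope.

(* Clusters are 'I_M, cluster i has size s i; a block matrix is a family of
   blocks  B i j : 'M_(s i, s j). *)
Definition blocks (C : Type) (M : nat) (s : 'I_M -> nat) :=
  forall i j : 'I_M, 'M[C]_(s i, s j).

Definition adjmx (C : numClosedFieldType) (m n : nat) (X : 'M[C]_(m, n)) : 'M[C]_(n, m) :=
  (map_mx (fun z => z^*) X)^T.

(* j \in P_i : j is a strict ancestor of i in the tree given by the parent
   map par (the root r satisfies par r = r). *)
Definition anc (M : nat) (par : 'I_M -> 'I_M) (i j : 'I_M) : bool :=
  (j != i) && [exists k : 'I_M, iter k par i == j].

Definition related (M : nat) (par : 'I_M -> 'I_M) (j k : 'I_M) : bool :=
  [|| j == k, anc par k j | anc par j k].

Definition ancs (M : nat) (par : 'I_M -> 'I_M) (i : 'I_M) : seq 'I_M :=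
  [seq j <- enum 'I_M | anc par i j].

Definition foldOrder (M : nat) (lev : 'I_M -> nat) (lam : nat) : seq 'I_M :=
  flatten [seq [seq i <- enum 'I_M | lev i == l] | l <- iota 1 (lam - 1)].

Definition setb (C : Type) (M : nat) (s : 'I_M -> nat) (P : blocks C s)
  (i j : 'I_M) (X : 'M[C]_(s i, s j)) : blocks C s :=
  fun a b =>
    match i =P a, j =P b with
    | ReflectT e1, ReflectT e2 =>
        match e1 in _ = a', e2 in _ = b' return 'M[C]_(s a', s b') with
        | erefl, erefl => X end
    | _, _ => P a b
    end.
Arguments setb {C M s} P i j X.

Section Procedures.
Variables (C : numClosedFieldType) (M : nat) (s : 'I_M -> nat)
  (par : 'I_M -> 'I_M) (lev : 'I_M -> nat) (lam : nat).

Definition foldStep (B : blocks C s) (i : 'I_M) : blocks C s :=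
  fun j k =>
    if anc par i j && anc par i k then
      B j k + (- (invmx (B i i) *m B i j))^T *m B i k
    else if ((j == i) && anc par i k) || ((k == i) && anc par i j) then 0
    else B j k.

Definition Afold (A : blocks C s) (p : nat) : blocks C s :=
  foldl foldStep A (take p (foldOrder lev lam)).

Definition Psi (A : blocks C s) (i j : 'I_M) : 'M[C]_(s i, s j) :=
  let B := Afold A (index i (foldOrder lev lam)) in - (invmx (B i i) *m B i j).

(* D_i : diagonal blocks of A^(lam-1) *)
Definition Dblk (A : blocks C s) (i : 'I_M) : 'M[C]_(s i) :=
  Afold A (size (foldOrder lev lam)) i i.

Definition Amx (A : blocks C s) : 'M[C]_(\sum_i s i) := mxblock A.

Definition Ainv (A : blocks C s) (k j : 'I_M) : 'M[C]_(s k, s j) :=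
  submxblock (invmx (Amx A)) k j.

Definition Gless (A : blocks C s) (Sig : forall i : 'I_M, 'M[C]_(s i)) :
  'M[C]_(\sum_i s i) :=
  invmx (Amx A) *m mxdiag Sig *m adjmx (invmx (Amx A)).

Definition N0 (A : blocks C s) (Sig : forall i : 'I_M, 'M[C]_(s i)) : blocks C s :=
  fun j k => Sig j *m adjmx (Ainv A k j).

Definition Nstep (A : blocks C s) (N : blocks C s) (i : 'I_M) : blocks C s :=
  fun j k =>
    if anc par i j && anc par i k then N j k + (Psi A i j)^T *m N i k
    else N j k.

Definition Nfinal (A : blocks C s) Sig : blocks C s :=
  foldl (Nstep A) (N0 A Sig) (foldOrder lev lam).

Definition P0 (A : blocks C s) Sig : blocks C s :=
  fun j k => invmx (Dblk A j) *m Nfinal A Sig j k.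

Definition Pstep (A : blocks C s) (P : blocks C s) (i : 'I_M) : blocks C s :=
  let P1 := foldl (fun Q j => setb Q i j (Q i j + \sum_(k <- ancs par i) Psi A i k *m Q k j))
                  P (ancs par i) in
  let P2 := foldl (fun Q j => setb Q j i (- adjmx (Q i j))) P1 (ancs par i) in
  setb P2 i i (P2 i i + \sum_(j <- ancs par i) Psi A i j *m P2 j i).

Definition Pfinal (A : blocks C s) Sig : blocks C s :=
  foldl (Pstep A) (P0 A Sig) (rev (foldOrder lev lam)).

End Procedures.

(* Let E_i = 1 + F_i be the block elimination matrix of cluster i: its only nonzero
   off-diagonal blocks are (E_i)_{i,k} = Psi_{i,k}, k an ancestor of i, and let
   E = E_{o_1} ... E_{o_m} be their product in folding order o.
   1. Folding cluster i is the congruence B |-> E_i^T B E_i (A being symmetric, the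
      rows of the clusters folded earlier are already zero off the diagonal), so
      E^T A E = D = diag(D_i).  Hence A^{-1} = E D^{-1} E^T and G^< = E X with
      X = D^{-1} E^T Sigma^< (A^{-1})^dagger.
   2. The forward sweep (2) multiplies by the E_i^T one at a time, so step (3)
      produces the blocks of X at related pairs.
   3. Left multiplication by E_i only changes block row i; peeling off the factors of E
      gives the back substitution G_{i,b} = X_{i,b} + sum_{k in P_i} Psi_{i,k} G_{k,b}.
   4. The backward sweep (4) thus replaces, in reverse folding order, block row i by
      that of G^< and block column i by its mirror image (G^< is skew-Hermitian);
      an invariant over the processed clusters yields the theorem. *)

From HB Require Import structures.
From mathcomp Require Import all_boot all_order all_algebra zify.
Import Order.TTheory GRing.Theory Num.Theory.
Local Open Scope ring_scope.
Set Implicit Arguments. Unset Strict Implicit. Unset Printing Implicit Defensive.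

Section Adjoint.
Variable C : numClosedFieldType.

Lemma adjmx_mul m n p (X : 'M[C]_(m, n)) (Y : 'M[C]_(n, p)) :
  adjmx (X *m Y) = adjmx Y *m adjmx X.
Proof. by rewrite /adjmx map_mxM trmx_mul. Qed.

Lemma adjmxK m n (X : 'M[C]_(m, n)) : adjmx (adjmx X) = X.
Proof. by apply/matrixP => i j; rewrite !mxE conjCK. Qed.

Lemma adjmx0 m n : adjmx (0 : 'M[C]_(m, n)) = 0.
Proof. by apply/matrixP => i j; rewrite !mxE conjC0. Qed.

Variables (M : nat) (s : 'I_M -> nat).

Lemma submxblock_adj (Q : 'M[C]_(\sum_i s i)) a b :
  submxblock (adjmx Q) a b = adjmx (submxblock Q b a).
Proof. by apply/matrixP => k l; rewrite !mxE. Qed.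

Lemma adjmx_mxdiag (D : forall i, 'M[C]_(s i)) :
  adjmx (mxdiag D) = mxdiag (fun i => adjmx (D i)).
Proof.
apply/mxblockP => a b; rewrite submxblock_adj /mxdiag !mxblockK.
by case: (eqVneq a b) => [<-|_]; rewrite ?conform_mx_id ?adjmx0.
Qed.

End Adjoint.

Section BlockDiagonal.
Variables (R : pzRingType) (M : nat) (s : 'I_M -> nat).

Lemma mxdiag_mul (D D' : forall i, 'M[R]_(s i)) :
  mxdiag D *m mxdiag D' = mxdiag (fun i => D i *m D' i).
Proof.
rewrite [mxdiag D']/mxdiag mul_mxdiag_mxblock /mxdiag; apply: eq_mxblock => a b.
by case: eqP => [<-|_]; rewrite ?conform_mx_id ?mulmx0.
Qed.

Lemma submxblock_mxdiag_mul (D : forall i, 'M[R]_(s i)) (Q : 'M[R]_(\sum_i s i)) a b :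
  submxblock (mxdiag D *m Q) a b = D a *m submxblock Q a b.
Proof. by rewrite -[Q in LHS]submxblockK mul_mxdiag_mxblock mxblockK. Qed.

End BlockDiagonal.

Section BlockUpdates.
Variables (C : Type) (M : nat) (s : 'I_M -> nat).

Lemma setb_eq (P : blocks C s) i j X : setb P i j X i j = X.
Proof.
rewrite /setb; case: (i =P i) => [e|/(_ erefl)//].
case: (j =P j) => [e'|/(_ erefl)//].
by rewrite (eq_irrelevance e erefl) (eq_irrelevance e' erefl).
Qed.

Lemma setb_neq (P : blocks C s) i j X a b :
  (a != i) || (b != j) -> setb P i j X a b = P a b.
Proof.
rewrite /setb; case: (i =P a) => [e|//]; case: (j =P b) => [e'|//].
by subst; rewrite !eqxx.
Qed.

(* Setting the blocks (i, j), j in l, each computed from the current state by g: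
   the untouched blocks keep their value, and since g only reads column j, block
   (i, j) receives g evaluated on the initial state. *)
Lemma foldl_setrow (P : blocks C s) i (l : seq 'I_M)
  (g : blocks C s -> forall j, 'M[C]_(s i, s j)) :
  (forall Q Q' j, (forall a, Q a j = Q' a j) -> g Q j = g Q' j) -> uniq l ->
  (forall a b, (a != i) || (b \notin l) ->
     foldl (fun Q j => setb Q i j (g Q j)) P l a b = P a b) /\
  (forall b, b \in l -> foldl (fun Q j => setb Q i j (g Q j)) P l i b = g P b).
Proof.
move=> hg; elim: l P => [|x l IH] P //=.
case/andP => xl ul; have [IH1 IH2] := IH (setb P i x (g P x)) ul; split.
- move=> a b; rewrite in_cons negb_or => hab; rewrite IH1.
    by apply: setb_neq; case/orP: hab => [->//|/andP [->]]; rewrite orbT.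
  by case/orP: hab => [->//|/andP [_ ->]]; rewrite orbT.
- move=> b; rewrite in_cons => /orP [/eqP ->|bl].
    by rewrite IH1 ?xl ?orbT // setb_eq.
  have nbx : b != x by apply: contraNneq xl => <-.
  by rewrite IH2 //; apply: hg => a'; rewrite setb_neq // nbx orbT.
Qed.

Lemma foldl_setcol (P : blocks C s) i (l : seq 'I_M)
  (h : forall j, 'M[C]_(s i, s j) -> 'M[C]_(s j, s i)) :
  uniq l -> i \notin l ->
  (forall a b, (b != i) || (a \notin l) ->
     foldl (fun Q j => setb Q j i (h j (Q i j))) P l a b = P a b) /\
  (forall a, a \in l -> foldl (fun Q j => setb Q j i (h j (Q i j))) P l a i = h a (P i a)).
Proof.
elim: l P => [|x l IH] P //=.
case/andP => xl ul; rewrite in_cons negb_or => /andP [nix nil].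
have [IH1 IH2] := IH (setb P x i (h x (P i x))) ul nil; split.
- move=> a b; rewrite in_cons negb_or => hab; rewrite IH1.
    by apply: setb_neq; case/orP: hab => [->|/andP [->]]; rewrite ?orbT.
  by case/orP: hab => [->//|/andP [_ ->]]; rewrite orbT.
- move=> a; rewrite in_cons => /orP [/eqP ->|al].
    by rewrite IH1 ?xl ?orbT // setb_eq.
  by rewrite IH2 // setb_neq // nix.
Qed.

End BlockUpdates.

Section Ancestors.
Variables (M : nat) (par : 'I_M -> 'I_M) (lev : 'I_M -> nat).
Hypothesis lev_anc : forall i j, anc par i j -> (lev i < lev j)%N.

Lemma ancE a b : anc par a b = (b != a) && fconnect par a b.
Proof.
congr (_ && _); apply/existsP/idP => [[k /eqP <-]|ab]; first exact: fconnect_iter.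
have k_lt : (findex par a b < M)%N.
  by apply: leq_trans (findex_max ab) _; rewrite -{2}[M]card_ord max_card.
by exists (Ordinal k_lt); rewrite iter_findex.
Qed.

Lemma anc_neq a b : anc par a b -> b != a.
Proof. by case/andP. Qed.

Lemma anc_irr a : anc par a a = false.
Proof. by rewrite /anc eqxx. Qed.

Lemma anc_asym a b : anc par a b -> anc par b a = false.
Proof. by move=> ab; apply/negP => /lev_anc; rewrite ltnNge ltnW ?lev_anc. Qed.

Lemma anc_trans a b c : anc par a b -> anc par b c -> anc par a c.
Proof.
move=> ab bc; move: (ab) (bc); rewrite !ancE => /andP [_ ab'] /andP [_ bc'].
rewrite (connect_trans ab' bc') andbT.
by apply: contraTneq (lev_anc ab) => ca; rewrite -leqNgt -ca ltnW ?lev_anc.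
Qed.

Lemma mem_ancs i k : (k \in ancs par i) = anc par i k.
Proof. by rewrite mem_filter mem_enum andbT. Qed.

Lemma uniq_ancs i : uniq (ancs par i).
Proof. exact/filter_uniq/enum_uniq. Qed.

Lemma anc_chain a j k :
  anc par a j -> anc par a k -> [|| j == k, anc par j k | anc par k j].
Proof.
rewrite ancE => /andP [_ aj]; rewrite ancE => /andP [_ ak].
case: (eqVneq j k) => //= njk; rewrite !ancE njk eq_sym njk /=.
rewrite -(iter_findex aj) -(iter_findex ak).
case: (leqP (findex par a j) (findex par a k)) => h.
  by rewrite -(subnK h) iterD fconnect_iter.
by rewrite -(subnK (ltnW h)) iterD fconnect_iter orbT.
Qed.

End Ancestors.

Section Elimination.
Variables (C : comPzRingType) (M : nat) (s : 'I_M -> nat) (par : 'I_M -> 'I_M)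
  (Ps : blocks C s).
Local Notation n := (\sum_i s i)%N.

Definition elim_mx (i : 'I_M) : 'M[C]_n :=
  1%:M + mxblock (fun a b => if (a == i) && anc par i b then Ps a b else 0).

Lemma block_elim_mul_row i b (Q : 'M[C]_n) :
  submxblock (elim_mx i *m Q) i b =
  submxblock Q i b + \sum_(k <- ancs par i) Ps i k *m submxblock Q k b.
Proof.
rewrite mulmxDl mul1mx submxblockD -[Q in X in _ + X]submxblockK mul_mxblock.
rewrite mxblockK /ancs big_filter big_enum_cond; congr (_ + _).
by rewrite [RHS]big_mkcond; apply: eq_bigr => k _; rewrite eqxx; case: ifP; rewrite ?mul0mx.
Qed.

Lemma block_elim_mul_other i a b (Q : 'M[C]_n) : a != i ->
  submxblock (elim_mx i *m Q) a b = submxblock Q a b.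
Proof.
move=> nai; rewrite mulmxDl mul1mx submxblockD -[Q in X in _ + X]submxblockK.
by rewrite mul_mxblock mxblockK big1 ?addr0 // => k _; rewrite (negbTE nai) mul0mx.
Qed.

Lemma block_trelim_mul i a b (Q : 'M[C]_n) :
  submxblock ((elim_mx i)^T *m Q) a b =
  submxblock Q a b + (if anc par i a then (Ps i a)^T *m submxblock Q i b else 0).
Proof.
rewrite linearD /= trmx1 mulmxDl mul1mx submxblockD; congr (_ + _).
rewrite tr_mxblock -[Q in LHS]submxblockK mul_mxblock mxblockK.
rewrite (bigD1 i) //= eqxx big1 ?addr0 => [|j nji]; last by rewrite (negbTE nji) trmx0 mul0mx.
by case: (anc par i a); rewrite ?trmx0 ?mul0mx.
Qed.

Lemma block_mul_elim i a b (Q : 'M[C]_n) :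
  submxblock (Q *m elim_mx i) a b =
  submxblock Q a b + (if anc par i b then submxblock Q a i *m Ps i b else 0).
Proof.
rewrite -[LHS]trmxK tr_submxblock trmx_mul block_trelim_mul linearD /=.
rewrite tr_submxblock trmxK; congr (_ + _).
by case: ifP; rewrite ?trmx0 // trmx_mul trmxK tr_submxblock trmxK.
Qed.

Definition elim_prod (l : seq 'I_M) : 'M[C]_n := foldr (fun x Y => elim_mx x *m Y) 1%:M l.

Lemma elim_prod_cat l1 l2 : elim_prod (l1 ++ l2) = elim_prod l1 *m elim_prod l2.
Proof. by elim: l1 => [|x l1 IH] /=; rewrite ?mul1mx // IH mulmxA. Qed.

Lemma elim_prod_rcons l x : elim_prod (rcons l x) = elim_prod l *m elim_mx x.
Proof. by rewrite -cats1 elim_prod_cat /= mulmx1. Qed.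

Lemma block_elim_prod_mul l a b (Q : 'M[C]_n) : a \notin l ->
  submxblock (elim_prod l *m Q) a b = submxblock Q a b.
Proof.
elim: l => [|x l IH] /=; first by rewrite mul1mx.
rewrite in_cons negb_or => /andP [nax nal].
by rewrite -mulmxA block_elim_mul_other // IH.
Qed.

End Elimination.

Section FoldStep.
Variables (C : numClosedFieldType) (M : nat) (s : 'I_M -> nat) (par : 'I_M -> 'I_M)
  (X Ps : blocks C s) (i : 'I_M).
Hypotheses (X_sym : forall a b, X b a = (X a b)^T) (X_pivot : X i i \in unitmx)
  (PsE : forall b, Ps i b = - (invmx (X i i) *m X i b))
  (X_row : forall b, b != i -> ~~ anc par i b -> X i b = 0).

Lemma foldStep_congruence :
  mxblock (foldStep par X i) = (elim_mx par Ps i)^T *m mxblock X *m elim_mx par Ps i.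
Proof.
have pivot_Ps b : X i i *m Ps i b = - X i b.
  by rewrite PsE mulmxN mulmxA mulmxV // mul1mx.
have tr_Ps a : (Ps i a)^T = - (X a i *m invmx (X i i)).
  by rewrite PsE linearN /= trmx_mul trmx_inv -!X_sym.
apply/mxblockP => a b; rewrite mxblockK -mulmxA block_trelim_mul !block_mul_elim !mxblockK.
rewrite /foldStep -!PsE.
case ha: (anc par i a); case hb: (anc par i b) => /=.
- rewrite pivot_Ps addrN mulmx0 addr0; congr (_ + _).
  by rewrite tr_Ps PsE mulNmx mulmxN mulmxA.
- rewrite (negbTE (anc_neq ha)) /= addr0.
  case: (eqVneq b i) => [->|nbi].
    by rewrite addr0 tr_Ps mulNmx -mulmxA mulVmx // mulmx1 addrN.
  by rewrite (X_row nbi) ?hb // addr0 mulmx0 addr0.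
- rewrite andbF orbF andbT addr0; case: (eqVneq a i) => [->|nai].
    by rewrite pivot_Ps addrN.
  by rewrite [X a i]X_sym (X_row nai) ?ha // trmx0 mul0mx addr0.
- by rewrite !andbF !addr0.
Qed.

Lemma foldStep_row b : b != i -> foldStep par X i i b = 0.
Proof.
move=> nbi; rewrite /foldStep anc_irr eqxx andbF orbF /=.
by case: ifP => // /negbT; exact: X_row.
Qed.

Lemma foldStep_other a b : a != i -> ~~ anc par i a -> foldStep par X i a b = X a b.
Proof. by move=> nai nha; rewrite /foldStep (negbTE nai) (negbTE nha) /= andbF. Qed.

End FoldStep.

Section FoldOrder.
Variables (M : nat) (par : 'I_M -> 'I_M) (r : 'I_M) (lev : 'I_M -> nat) (lam : nat).
Hypotheses (root_fixed : par r = r) (lev_range : forall i, (1 <= lev i <= lam)%N)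
  (lev_anc : forall i j, anc par i j -> (lev i < lev j)%N)
  (lev_root : lev r = lam) (root_uniq : forall i, lev i = lam -> i = r).
Local Notation o := (foldOrder lev lam).

Lemma anc_root b : anc par r b = false.
Proof.
have iter_root k : iter k par r = r by elim: k => //= k ->.
rewrite /anc; case: (eqVneq b r) => //= nbr.
by apply/negbTE/existsPn => k; rewrite iter_root eq_sym.
Qed.

Lemma mem_foldOrder a : (a \in o) = (a != r).
Proof.
apply/flatten_mapP/idP => [[l]|na].
  rewrite mem_iota mem_filter => /andP [h1 h2] /andP [/eqP el _].
  by apply/eqP => ear; move: h1 h2; rewrite -el ear lev_root; lia.
exists (lev a); last by rewrite mem_filter eqxx mem_enum.
have : lev a != lam by apply: contra na => /eqP /root_uniq ->.
by rewrite mem_iota; have := lev_range a; lia.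
Qed.

Lemma uniq_foldOrder : uniq o.
Proof.
rewrite /foldOrder; move: (lam - 1)%N => k; elim: k 1%N => [|k IH] st //=.
rewrite cat_uniq IH filter_uniq ?enum_uniq // andbT.
apply/hasPn => x /flatten_mapP [l']; rewrite mem_iota mem_filter => hl /andP [/eqP elx _].
by rewrite mem_filter elx; apply/negP => /andP [/eqP e _]; move: hl; rewrite e; lia.
Qed.

Lemma index_lev a b : a \in o -> (lev a < lev b)%N -> (index a o < index b o)%N.
Proof.
move=> ao lab.
have hla : (1 <= lev a <= lam - 1)%N.
  have : lev a != lam by apply: contraTneq ao => /root_uniq ->; rewrite mem_foldOrder eqxx.
  by have := lev_range a; lia.
rewrite /foldOrder (_ : (lam - 1 = lev a + (lam - 1 - lev a))%N); last by lia.
rewrite iotaD map_cat flatten_cat !index_cat.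
set F := flatten _.
have aF : a \in F.
  apply/flatten_mapP; exists (lev a); last by rewrite mem_filter eqxx mem_enum.
  by rewrite mem_iota; lia.
have -> : b \in F = false.
  apply/negbTE/negP => /flatten_mapP [l]; rewrite mem_iota mem_filter => hl /andP [/eqP el _].
  by move: hl lab; rewrite el; lia.
by rewrite aF ltn_addr // index_mem.
Qed.

Lemma index_anc a b : anc par a b -> (index a o < index b o)%N.
Proof.
move=> ab; apply: index_lev (lev_anc ab).
by rewrite mem_foldOrder; apply: contraTneq ab => ->; rewrite anc_root.
Qed.

Lemma index_foldOrder_root a : (size o <= index a o)%N = (a == r).
Proof. by rewrite leqNgt index_mem mem_foldOrder negbK. Qed.

Section Folding.
Variables (C : numClosedFieldType) (s : 'I_M -> nat) (A : blocks C s).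
Hypotheses (A_sym : (Amx A)^T = Amx A) (A_sparse : forall i j, ~~ related par i j -> A i j = 0)
  (A_pivots : forall i, i \in foldOrder lev lam ->
      Afold par lev lam A (index i (foldOrder lev lam)) i i \in unitmx).
Local Notation m := (size (foldOrder lev lam)).
Local Notation B := (Afold par lev lam A).
Local Notation Ps := (Psi par lev lam A).

Lemma index_nth_foldOrder p : (p < m)%N -> index (nth r o p) o = p.
Proof. by move=> hp; rewrite index_uniq // uniq_foldOrder. Qed.

Lemma Afold_step p : (p < m)%N -> B p.+1 = foldStep par (B p) (nth r o p).
Proof. by move=> hp; rewrite /Afold (take_nth r hp) foldl_rcons. Qed.

Lemma foldStep_sparse (X : blocks C s) i a b :
  (forall a b, ~~ related par a b -> X a b = 0) ->
  ~~ related par a b -> foldStep par X i a b = 0.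
Proof.
move=> X_sparse nab; rewrite /foldStep; case: ifP => [/andP [ia ib]|_].
  by move: nab; rewrite /related; case/or3P: (anc_chain ia ib) => ->; rewrite ?orbT.
by case: ifP => // _; exact: X_sparse.
Qed.

Lemma congruence_sym (X : blocks C s) (P : 'M[C]_(\sum_i s i)) :
  mxblock X = P^T *m Amx A *m P -> forall a b, X b a = (X a b)^T.
Proof.
move=> XE a b.
have X_sym : (mxblock X)^T = mxblock X by rewrite XE !trmx_mul trmxK A_sym mulmxA.
by rewrite -[X b a](mxblockK X) -X_sym -tr_submxblock mxblockK.
Qed.

Lemma fold_invariant p : (p <= m)%N ->
  [/\ mxblock (B p) = (elim_prod par Ps (take p o))^T *m Amx A *m elim_prod par Ps (take p o),
   forall a b, (index a o < p)%N -> b != a -> B p a b = 0 &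
   forall a b, ~~ related par a b -> B p a b = 0].
Proof.
elim: p => [_|p IH hp]; first by rewrite /Afold take0 /= trmx1 mul1mx mulmx1.
have [BE B_folded B_sparse] := IH (ltnW hp); set i := nth r o p.
have ii : index i o = p by rewrite index_nth_foldOrder.
have B_sym := congruence_sym BE.
have B_row b : b != i -> ~~ anc par i b -> B p i b = 0.
  move=> nbi nib; case hr: (related par i b); last by apply: B_sparse; rewrite hr.
  move: hr; rewrite /related eq_sym (negbTE nbi) (negbTE nib) orbF /= => bi.
  have bi_lt : (index b o < p)%N by rewrite -ii index_anc.
  by rewrite B_sym B_folded ?trmx0 // eq_sym.
have PsE b : Ps i b = - (invmx (B p i i) *m B p i b) by rewrite /Psi ii.
have pivot : B p i i \in unitmx by rewrite -{1}ii A_pivots // mem_nth.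
rewrite Afold_step // (take_nth r hp) elim_prod_rcons; split.
- by rewrite (foldStep_congruence B_sym pivot PsE B_row) BE trmx_mul !mulmxA.
- move=> a b; rewrite ltnS leq_eqVlt => /orP [/eqP ap|ap] nba.
    have ai : a = i by rewrite /i -ap nth_index // -index_mem ap.
    by rewrite ai (foldStep_row B_row) // -ai.
  rewrite foldStep_other ?B_folded //; first by apply: contraTneq ap => ->; rewrite ii ltnn.
  by apply/negP => /index_anc; rewrite ii; lia.
- by move=> a b; apply: foldStep_sparse.
Qed.

Lemma elim_diagonalizes :
  (elim_prod par Ps o)^T *m Amx A *m elim_prod par Ps o = mxdiag (Dblk par lev lam A).
Proof.
have [BE B_folded _] := fold_invariant (leqnn m); rewrite take_size in BE.
rewrite -BE /mxdiag; apply: eq_mxblock => a b.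
case: (eqVneq a b) => [<-|nab]; first by rewrite conform_mx_id.
suff : B m a b = 0 by [].
case: (ltnP (index a o) m) => ha; first by rewrite B_folded // eq_sym.
have ar : a = r by apply/eqP; rewrite -index_foldOrder_root.
have hb : (index b o < m)%N by rewrite index_mem mem_foldOrder -ar eq_sym.
by rewrite (congruence_sym BE) B_folded ?trmx0.
Qed.

Section Sweeps.
Variable Sig : forall i : 'I_M, 'M[C]_(s i).
Hypotheses (A_inv : Amx A \in unitmx) (D_inv : forall i, Dblk par lev lam A i \in unitmx)
  (Sig_skew : forall i, adjmx (Sig i) = - Sig i).
Local Notation E := (elim_prod par Ps o).
Local Notation Dinv := (mxdiag (fun i => invmx (Dblk par lev lam A i))).
Local Notation Y := (mxdiag Sig *m adjmx (invmx (Amx A))).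
Local Notation X := (Dinv *m (E^T *m Y)).
Local Notation G := (Gless A Sig).

Lemma inverse_factorization : invmx (Amx A) = E *m Dinv *m E^T.
Proof.
have DinvD : Dinv *m mxdiag (Dblk par lev lam A) = 1%:M.
  by rewrite mxdiag_mul -(mxdiagZ (p_ := s) 1); apply: eq_mxdiag => i; rewrite mulVmx.
have left_inv : (Dinv *m E^T *m Amx A) *m E = 1%:M.
  by rewrite -DinvD -elim_diagonalizes !mulmxA.
have right_inv : (E *m Dinv *m E^T) *m Amx A = 1%:M.
  by rewrite -(mulmx1C left_inv) !mulmxA.
by rewrite -[LHS]mul1mx -right_inv -[_ *m invmx _]mulmxA mulmxV // mulmx1.
Qed.

Lemma Gless_factorization : G = E *m X.
Proof. by rewrite /Gless {1}inverse_factorization !mulmxA. Qed.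

Lemma Gless_skew a b : submxblock G b a = - adjmx (submxblock G a b).
Proof.
have G_skew : adjmx G = - G.
  rewrite /Gless !adjmx_mul adjmxK adjmx_mxdiag (eq_mxdiag Sig_skew) mxdiagN.
  by rewrite mulNmx mulmxN !mulmxA.
by rewrite -submxblock_adj G_skew submxblockN opprK.
Qed.

Lemma back_substitution i b : i \in o ->
  submxblock G i b = submxblock X i b + \sum_(k <- ancs par i) Ps i k *m submxblock G k b.
Proof.
move=> io; set q := index i o.
have E_split p : E = elim_prod par Ps (take p o) *m elim_prod par Ps (drop p o).
  by rewrite -elim_prod_cat cat_take_drop.
have drop_q : drop q o = i :: drop q.+1 o by rewrite (drop_nth r) ?index_mem ?nth_index.
have G_before : G =
    elim_prod par Ps (take q o) *m (elim_mx par Ps i *m (elim_prod par Ps (drop q.+1 o) *m X)).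
  by rewrite Gless_factorization {1}(E_split q) drop_q /= !mulmxA.
have G_after : G = elim_prod par Ps (take q.+1 o) *m (elim_prod par Ps (drop q.+1 o) *m X).
  by rewrite Gless_factorization {1}(E_split q.+1) !mulmxA.
rewrite {1}G_before block_elim_prod_mul; last by apply/negP => /index_ltn; rewrite ltnn.
rewrite block_elim_mul_row block_elim_prod_mul; last first.
  by move: (drop_uniq q uniq_foldOrder); rewrite drop_q => /andP [].
congr (_ + _); apply: eq_big_seq => k; rewrite mem_ancs => ik.
rewrite G_after [in RHS]block_elim_prod_mul //; apply/negP => /index_ltn.
by rewrite ltnS leqNgt index_anc.
Qed.

Lemma forward_sweep_invariant p : (p <= m)%N -> forall a b, (b == a) || anc par a b ->
  foldl (Nstep par lev lam A) (N0 A Sig) (take p o) a b =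
  submxblock ((elim_prod par Ps (take p o))^T *m Y) a b.
Proof.
elim: p => [_ a b _|p IH hp a b ab].
  by rewrite take0 /= trmx1 mul1mx submxblock_mxdiag_mul submxblock_adj.
rewrite (take_nth r hp) foldl_rcons elim_prod_rcons trmx_mul -mulmxA block_trelim_mul.
set i := nth r o p; rewrite /Nstep.
case ia: (anc par i a); last by rewrite /= IH ?(ltnW hp) // addr0.
have ib : anc par i b by case/orP: ab => [/eqP ->//|ab]; exact: (anc_trans lev_anc ia ab).
by rewrite ib /= !IH ?ib ?orbT ?(ltnW hp).
Qed.

Lemma forward_sweep a b : (b == a) || anc par a b ->
  P0 par lev lam A Sig a b = submxblock X a b.
Proof.
move=> ab; rewrite /P0 /Nfinal -(take_size o) forward_sweep_invariant // take_size.
by rewrite submxblock_mxdiag_mul.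
Qed.

Section BackwardStep.
Variables (P : blocks C s) (i : 'I_M).
Let row_update (P' : blocks C s) (j : 'I_M) : 'M[C]_(s i, s j) :=
  P' i j + \sum_(k <- ancs par i) Ps i k *m P' k j.
Local Notation P1 := (foldl (fun P' j => setb P' i j (row_update P' j)) P (ancs par i)).
Local Notation P2 := (foldl (fun P' j => setb P' j i (- adjmx (P' i j))) P1 (ancs par i)).
Local Notation R := (Pstep par lev lam A P i).

Lemma PstepE : R = setb P2 i i (P2 i i + \sum_(j <- ancs par i) Ps i j *m P2 j i).
Proof. by []. Qed.

Let i_ancs : i \notin ancs par i.
Proof. by rewrite mem_ancs anc_irr. Qed.

Let P1_spec :
  (forall a b, (a != i) || (b \notin ancs par i) -> P1 a b = P a b) /\
  (forall b, b \in ancs par i -> P1 i b = row_update P b).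
Proof.
apply: foldl_setrow (uniq_ancs par i) => P' P'' j e.
by rewrite /row_update e; congr (_ + _); apply: eq_bigr => k _; rewrite e.
Qed.

Let P2_spec :
  (forall a b, (b != i) || (a \notin ancs par i) -> P2 a b = P1 a b) /\
  (forall a, a \in ancs par i -> P2 a i = - adjmx (P1 i a)).
Proof.
exact: (foldl_setcol P1 (fun j (Bij : 'M[C]_(s i, s j)) => - adjmx Bij) (uniq_ancs par i) i_ancs).
Qed.

Lemma Pstep_row j : anc par i j -> R i j = row_update P j.
Proof.
move=> ij; have nji := anc_neq ij.
by rewrite PstepE setb_neq ?nji ?orbT // P2_spec.1 ?nji // P1_spec.2 ?mem_ancs.
Qed.

Lemma Pstep_col j : anc par i j -> R j i = - adjmx (row_update P j).
Proof.
move=> ij; have nji := anc_neq ij.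
by rewrite PstepE setb_neq ?nji // P2_spec.2 ?mem_ancs // P1_spec.2 ?mem_ancs.
Qed.

Lemma Pstep_diag : R i i = P i i + \sum_(j <- ancs par i) Ps i j *m R j i.
Proof.
rewrite PstepE setb_eq P2_spec.1 ?i_ancs ?orbT // P1_spec.1 ?i_ancs ?orbT //.
congr (_ + _); apply: eq_big_seq => j; rewrite mem_ancs => ij.
by rewrite setb_neq ?(anc_neq ij).
Qed.

Lemma Pstep_untouched a b :
  (a == i) ==> (b != i) && ~~ anc par i b -> (b == i) ==> ~~ anc par i a -> R a b = P a b.
Proof.
move=> ha hb; rewrite PstepE setb_neq; last by case: (a == i) ha => //= /andP [->].
rewrite P2_spec.1; last by rewrite mem_ancs; case: (b == i) hb => //= ->.
by rewrite P1_spec.1 // mem_ancs; case: (a == i) ha => //= /andP [_ ->].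
Qed.

End BackwardStep.

Definition swept (q : nat) (P : blocks C s) : Prop :=
  forall a b, (b == a) || anc par a b ->
    if (q <= index a o)%N then P a b = submxblock G a b /\ P b a = submxblock G b a
    else P a b = submxblock X a b.

Lemma swept_done q P a b : swept q P -> (q <= index a o)%N -> (b == a) || anc par a b ->
  P a b = submxblock G a b /\ P b a = submxblock G b a.
Proof. by move=> sw qa ab; have := sw a b ab; rewrite qa. Qed.

Lemma swept_pending q P a b : swept q P -> (index a o < q)%N -> (b == a) || anc par a b ->
  P a b = submxblock X a b.
Proof. by move=> sw aq ab; have := sw a b ab; rewrite leqNgt aq. Qed.

Lemma swept_comparable q P j k : swept q P -> (q <= index j o)%N -> (q <= index k o)%N ->
  [|| j == k, anc par j k | anc par k j] -> P k j = submxblock G k j.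
Proof.
move=> sw qj qk; case/or3P => [/eqP <-|jk|kj].
- by have [] := swept_done sw qj (_ : (j == j) || _); rewrite ?eqxx.
- by have [] := swept_done sw qj (_ : (k == j) || _); rewrite ?jk ?orbT.
- by have [] := swept_done sw qk (_ : (j == k) || _); rewrite ?kj ?orbT.
Qed.

(* Before the backward sweep only the root counts as processed, and there
   G^< and X agree. *)
Lemma swept_start : swept m (P0 par lev lam A Sig).
Proof.
move=> a b ab; case: ifP => [ma|_]; last exact: forward_sweep.
have ar : a = r by apply/eqP; rewrite -index_foldOrder_root.
have ba : b = a by case/orP: ab => [/eqP //|]; rewrite ar anc_root.
have Grr : submxblock G r r = submxblock X r r.
  by rewrite Gless_factorization block_elim_prod_mul // mem_foldOrder eqxx.
by rewrite ba ar forward_sweep ?eqxx // Grr.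
Qed.

Lemma swept_step q P : (q < m)%N -> swept q.+1 P -> swept q (Pstep par lev lam A P (nth r o q)).
Proof.
move=> hq sw; set i := nth r o q.
have ii : index i o = q by rewrite index_nth_foldOrder.
have io : i \in o by rewrite mem_nth.
have later k : anc par i k -> (q < index k o)%N by rewrite -ii; exact: index_anc.
have row_G j : anc par i j ->
    P i j + \sum_(k <- ancs par i) Ps i k *m P k j = submxblock G i j.
  move=> ij; rewrite (back_substitution _ io) (swept_pending sw) ?ii ?ij ?orbT //.
  congr (_ + _); apply: eq_big_seq => k; rewrite mem_ancs => ik.
  by rewrite (swept_comparable sw) ?later ?(anc_chain ij ik).
have col_G j : anc par i j -> Pstep par lev lam A P i j i = submxblock G j i.
  by move=> ij; rewrite Pstep_col // row_G // -Gless_skew.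
move=> a b; case: (eqVneq a i) => [->|nai] ab.
  rewrite ii leqnn; case/orP: ab => [/eqP ->|ib]; last first.
    by rewrite Pstep_row // row_G // col_G.
  suff -> : Pstep par lev lam A P i i i = submxblock G i i by [].
  rewrite Pstep_diag (back_substitution _ io) (swept_pending sw) ?ii ?eqxx //.
  by congr (_ + _); apply: eq_big_seq => j; rewrite mem_ancs => ij; rewrite col_G.
have ia : (b == i) ==> ~~ anc par i a.
  apply/implyP => /eqP bi; move: ab; rewrite bi eq_sym (negbTE nai) /= => ai.
  by rewrite (anc_asym lev_anc ai).
have ab_fixed : Pstep par lev lam A P i a b = P a b.
  by apply: Pstep_untouched; rewrite ?(negbTE nai) ?nai //=.
have ba_fixed : Pstep par lev lam A P i b a = P b a.
  by apply: Pstep_untouched; rewrite ?(negbTE nai) ?nai //=.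
rewrite ab_fixed ba_fixed.
have -> : (q <= index a o)%N = (q < index a o)%N.
  rewrite leq_eqVlt orb_idl // => /eqP qa; case/eqP: nai.
  by rewrite /i qa nth_index // -index_mem -qa.
exact: sw.
Qed.

Lemma swept_all : swept 0 (Pfinal par lev lam A Sig).
Proof.
suff sw d : (d <= m)%N ->
    swept (m - d) (foldl (Pstep par lev lam A) (P0 par lev lam A Sig) (rev (drop (m - d) o))).
  by have := sw m (leqnn m); rewrite subnn drop0.
elim: d => [_|d IH hd]; first by rewrite subn0 drop_size; exact: swept_start.
have e : (m - d = (m - d.+1).+1)%N by lia.
rewrite (drop_nth r) ?rev_cons ?foldl_rcons; last by lia.
by apply: swept_step; [lia | rewrite -e; apply: IH; lia].
Qed.

Lemma Pfinal_correct i j : (j == i) || anc par i j ->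
  Pfinal par lev lam A Sig i j = submxblock G i j /\
  Pfinal par lev lam A Sig j i = submxblock G j i.
Proof. exact: swept_done swept_all (leq0n _). Qed.

End Sweeps.

End Folding.

End FoldOrder.

(* The theorem is Pfinal_correct. *)
Theorem mainTheorem3
  (C : numClosedFieldType) (M : nat) (s : 'I_M -> nat)
  (par : 'I_M -> 'I_M) (r : 'I_M) (lev : 'I_M -> nat) (lam : nat)
  (A : blocks C s) (Sig : forall i : 'I_M, 'M[C]_(s i))
  (Hroot : par r = r)
  (Hpar : forall i, i != r -> (lev i < lev (par i))%N)
  (Hlev : forall i, (1 <= lev i <= lam)%N)
  (Hlevanc : forall i j, anc par i j -> (lev i < lev j)%N)
  (Hlevroot : lev r = lam)
  (Hrootuniq : forall i, lev i = lam -> i = r)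
  (Hinv : Amx A \in unitmx)
  (Hsym : (Amx A)^T = Amx A)
  (Hsparse : forall i j, ~~ related par i j -> A i j = 0)
  (HfoldInv : forall i, i \in foldOrder lev lam ->
      Afold par lev lam A (index i (foldOrder lev lam)) i i \in unitmx)
  (HDinv : forall i, Dblk par lev lam A i \in unitmx)
  (Hskew : forall i, adjmx (Sig i) = - Sig i) :
  forall i j : 'I_M, (j == i) || anc par i j ->
    Pfinal par lev lam A Sig i j = submxblock (Gless A Sig) i j /\
    Pfinal par lev lam A Sig j i = submxblock (Gless A Sig) j i.
Proof.
exact: (Pfinal_correct Hroot Hlev Hlevanc Hlevroot Hrootuniq Hsym Hsparse HfoldInv
  Hinv HDinv Hskew).
Qed.
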